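(* Let $W$ be a discrete memoryless channel with finite input alphabet $\mathcal{X}$ and finite output alphabet $\mathcal{Y}$, with reliability function $E(R)$ and with $\vartheta(\rho)$ as defined in the context. Then for every $\rho\ge 1$, $$E(R)\le 2\rho\,\vartheta(\rho)\qquad\text{for all } R>\vartheta(\rho),$$ and if the channel is pairwise reversible, then moreover $E(R)\le\rho\,\vartheta(\rho)$ for all $R>\vartheta(\rho)$.
   Context: $W(y|x)$ are the transition probabilities; $W^{(n)}(\bm{y}|\bm{x})=\prod_{i=1}^n W(y_i|x_i)$. A code of block-length $n$ is a set of $M$ codewords $\bm{x}_1,\ldots,\bm{x}_M\in\mathcal{X}^n$ with rate $R=\frac{1}{n}\log M$ (natural log); a decoder partitions $\mathcal{Y}^n$ into decoding sets $Y_1,\ldots,Y_M$; the error probability for message $m$ is $P_{e|m}=\sum_{\bm{y}\notin Y_m}W^{(n)}(\bm{y}|\bm{x}_m)$ and $P_{e,\max}=\max_m P_{e|m}$. $P^{(n)}_{e,\max}(R)$ is the smallest $P_{e,\max}$ over all codes (and decoders) of length $n$ and rate at least $R$, and the reliability function is $E(R)=\limsup_{n\to\infty}-\frac1n\log P^{(n)}_{e,\max}(R)$ (taken to be $+\infty$ when the error probability can be made zero). State vectors: $\bm{\psi}_x\in\mathbb{R}^{|\mathcal{Y}|}$ with $\bm{\psi}_x(y)=\sqrt{W(y|x)}$, so $\langle\bm{\psi}_x,\bm{\psi}_{x'}\rangle=\sum_y\sqrt{W(y|x)W(y|x')}$. For $\rho\ge1$, an orthonormal representation of degree $\rho$ is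 a family $\{\tilde{\bm{\psi}}_x\}_{x\in\mathcal{X}}$ of unit-norm vectors in some Hilbert space with $|\langle\tilde{\bm{\psi}}_x,\tilde{\bm{\psi}}_{x'}\rangle|\le(\langle\bm{\psi}_x,\bm{\psi}_{x'}\rangle)^{1/\rho}$ for all $x,x'$; $\Gamma(\rho)$ is the set of all such representations; $V(\{\tilde{\bm{\psi}}_x\})=\min_{\bm{f}}\max_x\log\frac{1}{|\langle\tilde{\bm{\psi}}_x,\bm{f}\rangle|^2}$ over unit vectors $\bm{f}$; and $\vartheta(\rho)=\min_{\{\tilde{\bm{\psi}}_x\}\in\Gamma(\rho)}V(\{\tilde{\bm{\psi}}_x\})$. The channel is called pairwise reversible if for every pair of inputs $x,x'$ the function $s\mapsto\sum_y W(y|x)^{1-s}W(y|x')^{s}$ on $[0,1]$ attains its minimum at $s=1/2$. *)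

From HB Require Import structures.
From mathcomp Require Import all_boot all_order all_algebra.
From mathcomp Require Import all_classical all_reals all_analysis.
Set Implicit Arguments. Unset Strict Implicit. Unset Printing Implicit Defensive.
Import Order.TTheory GRing.Theory Num.Theory.
Local Open Scope classical_set_scope.
Local Open Scope ring_scope.

Section Channel.
Variables (R : realType) (X Y : finType).

(* A DMC: W x y = W(y|x). *)
Definition is_channel (W : X -> Y -> R) : Prop :=
  (forall x y, 0 <= W x y) /\ (forall x, \sum_(y : Y) W x y = 1).

Definition Wn (W : X -> Y -> R) n (x : {ffun 'I_n -> X}) (y : {ffun 'I_n -> Y}) : R :=
  \prod_(i < n) W (x i) (y i).

(* error probability of message m for codebook c and decoder dec
   (the decoding sets are Y_m = dec^-1 {m}) *)
Definition Pe_m (W : X -> Y -> R) n M (c : 'I_M -> {ffun 'I_n -> X})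
  (dec : {ffun 'I_n -> Y} -> 'I_M) (m : 'I_M) : R :=
  \sum_(y : {ffun 'I_n -> Y} | dec y != m) Wn W (c m) y.

Definition Pe_max (W : X -> Y -> R) n M (c : 'I_M -> {ffun 'I_n -> X})
  (dec : {ffun 'I_n -> Y} -> 'I_M) : R :=
  \big[Num.max/0]_(m < M) Pe_m W c dec m.

Definition Pemax_opt (W : X -> Y -> R) (n : nat) (Rt : R) : R :=
  inf [set p : R | exists M : nat, exists (c : 'I_M -> {ffun 'I_n -> X})
        (dec : {ffun 'I_n -> Y} -> 'I_M),
        (0 < M)%N /\ Rt <= ln (M%:R) / n%:R /\ p = Pe_max W c dec].

Definition reliability (W : X -> Y -> R) (Rt : R) : \bar R :=
  limn_esup (fun n : nat =>
    if Pemax_opt W n Rt == 0 then +oo%E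
    else ((- ln (Pemax_opt W n Rt)) / n%:R)%:E).

Definition bhatt (W : X -> Y -> R) (x x' : X) : R :=
  \sum_(y : Y) Num.sqrt (W x y * W x' y).

Definition dotv d (u v : 'I_d -> R) : R := \sum_(i < d) u i * v i.

Definition ortho_rep (W : X -> Y -> R) (rho : R) d (psi : X -> 'I_d -> R) : Prop :=
  (forall x, dotv (psi x) (psi x) = 1) /\
  (forall x x', `|dotv (psi x) (psi x')| <= (bhatt W x x') `^ (rho^-1)).

Definition loginvsq (a : R) : \bar R :=
  if a == 0 then +oo%E else (- ln (a ^+ 2))%:E.

Definition Vrep d (psi : X -> 'I_d -> R) : \bar R :=
  ereal_inf [set v | exists f : 'I_d -> R, dotv f f = 1 /\
     v = \big[Order.max/-oo%E]_(x : X) loginvsq (dotv (psi x) f)].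

Definition vartheta (W : X -> Y -> R) (rho : R) : \bar R :=
  ereal_inf [set v | exists d : nat, exists psi : X -> 'I_d -> R,
     ortho_rep W rho psi /\ v = Vrep psi].

Definition pairwise_reversible (W : X -> Y -> R) : Prop :=
  forall x x' : X, forall s : R, 0 <= s <= 1 ->
    \sum_(y : Y) (W x y) `^ (1 - 2^-1) * (W x' y) `^ (2^-1)
    <= \sum_(y : Y) (W x y) `^ (1 - s) * (W x' y) `^ s.

End Channel.

From HB Require Import structures.
From mathcomp Require Import all_boot all_order all_algebra.
From mathcomp Require Import all_classical all_reals all_analysis.
From mathcomp Require Import ring lra.
Import Order.TTheory GRing.Theory Num.Theory.

(* A pair of codewords whose output distributions overlap by e^(-nE) forces a
   maximal error probability of order e^(-nE).  Let psi be an orthonormal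
   representation of degree rho with unit vector f such that every |<psi_x, f>|^2
   is at least e^(-V).  For a code of rate above V the tensor powers of psi along
   the codewords are more than 2 e^(nV) unit vectors, each with squared cosine at
   least e^(-nV) against the tensor power of f; a Gram-matrix argument yields two
   of them with inner product at least e^(-nV)/2, and the degree-rho condition
   turns this into a Bhattacharyya coefficient B >= (e^(-nV)/2)^rho between two
   codewords.  Since the overlap is at least B^2/2, E(R) <= 2 rho V.
   For a pairwise reversible channel the tilted sums
   t |-> sum_y W(y|x)^(1/2-t) W(y|x')^(1/2+t) are minimal at t = 0, hence have zero
   slope and bounded curvature there; a Chernoff-type estimate then bounds the
   overlap below by e^(-o(n)) B, which gives E(R) <= rho V. *)

Set Implicit Arguments.
Unset Strict Implicit.
Unset Printing Implicit Defensive.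
Local Open Scope classical_set_scope.
Local Open Scope ring_scope.

Section RealFacts.
Variable R : realType.

Lemma CauchySchwarz_sum (J : finType) (u v : J -> R) :
  (\sum_j u j * v j) ^+ 2 <= (\sum_j u j ^+ 2) * (\sum_j v j ^+ 2).
Proof.
set A := \sum_j u j ^+ 2; set B := \sum_j v j ^+ 2; set C := \sum_j u j * v j.
have lagrange : \sum_i \sum_j (u i * v j - u j * v i) ^+ 2 = 2 * (A * B - C ^+ 2).
  under eq_bigr => i _.
    rewrite (eq_bigr (fun j => u i ^+ 2 * v j ^+ 2 + v i ^+ 2 * u j ^+ 2
                               - 2 * (u i * v i) * (u j * v j))); last by move=> j _; ring.
    rewrite sumrB big_split /= -!mulr_sumr -/A -/B -/C.
  over.
  rewrite sumrB big_split /= -!mulr_suml -mulr_sumr -/A -/B -/C; ring.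
have : 0 <= \sum_i \sum_j (u i * v j - u j * v i) ^+ 2.
  by apply: sumr_ge0 => i _; apply: sumr_ge0 => j _; exact: sqr_ge0.
by rewrite lagrange; lra.
Qed.

Lemma expR_le_quadratic (x : R) : x <= 2^-1 -> expR x <= 1 + x + 2 * x ^+ 2.
Proof.
move=> x_le.
set q := 1 + x + 2 * x ^+ 2.
have q_ge0 : 0 <= q by rewrite /q; nra.
have q1x : 1 <= q * (1 - x).
  have : 0 <= x ^+ 2 * (1 - 2 * x) by apply: mulr_ge0; [exact: sqr_ge0 | lra].
  by rewrite /q; nra.
have expRNx := expR_ge1Dx (- x).
have <- : expR x * (q * expR (- x)) = q by rewrite mulrCA -expRD subrr expR0 mulr1.
apply: (@le_trans _ _ (expR x * (q * (1 - x)))); first by rewrite ler_peMr ?expR_ge0.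
by rewrite ler_wpM2l ?expR_ge0 // ler_wpM2l //; lra.
Qed.

Lemma prodr_powR (I : finType) (b : I -> R) r : (forall i, 0 <= b i) ->
  \prod_i b i `^ r = (\prod_i b i) `^ r.
Proof.
move=> b_ge0.
suff [] : \prod_i b i `^ r = (\prod_i b i) `^ r /\ 0 <= \prod_i b i by [].
elim/big_rec2: _ => [|i p q _ [-> q_ge0]]; first by rewrite powR1.
by rewrite powRM // mulr_ge0.
Qed.

Lemma ler_sum_term (I : finType) (F : I -> R) i :
  (forall j, 0 <= F j) -> F i <= \sum_j F j.
Proof. by move=> F_ge0; rewrite (bigD1 i) //= lerDl sumr_ge0. Qed.

Lemma sum_ffun_prodM (I J : finType) (p q : I -> J -> R) :
  \sum_(j : {ffun I -> J}) (\prod_i p i (j i)) * (\prod_i q i (j i)) =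
  \prod_i \sum_k p i k * q i k.
Proof. by rewrite bigA_distr_bigA; apply: eq_bigr => j _; rewrite -big_split. Qed.

Lemma loginvsq_le (a V : R) : (loginvsq a <= V%:E)%E -> expR (- V) <= a ^+ 2.
Proof.
rewrite /loginvsq; case: eqP => // /eqP a_neq0; rewrite lee_fin => le_V.
have a2_gt0 : 0 < a ^+ 2 by rewrite exprn_even_gt0.
by rewrite -(lnK a2_gt0) ler_expR; lra.
Qed.

Lemma loginvsq_ge0 d (u f : 'I_d -> R) : dotv u u = 1 -> dotv f f = 1 ->
  (0 <= loginvsq (dotv u f))%E.
Proof.
move=> u1 f1; rewrite /loginvsq; case: ifP => // _; rewrite lee_fin oppr_ge0.
apply: ln_le0; have := CauchySchwarz_sum u f.
suff sqr_dotv (g : 'I_d -> R) : \sum_i g i ^+ 2 = dotv g g by rewrite !sqr_dotv u1 f1 mulr1.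
by rewrite /dotv; apply: eq_bigr => i _; rewrite expr2.
Qed.

Lemma limn_esup_le (u : nat -> \bar R) (b : R) :
  (forall e, 0 < e -> \forall n \near \oo, (u n <= (b + e)%:E)%E) ->
  (limn_esup u <= b%:E)%E.
Proof.
move=> u_le; apply/lee_addgt0Pr => e e0; rewrite -EFinD; apply: ge_ereal_inf.
exists (ereal_sup (u @` [set n | (u n <= (b + e)%:E)%E])).
  by exists [set n | (u n <= (b + e)%:E)%E] => //; exact: u_le.
by apply: ge_ereal_sup => _ [n le_n <-].
Qed.

Lemma expRB_ln (x a : R) : 0 < a -> expR (x - ln a) = expR x / a.
Proof. by move=> a_gt0; rewrite expRB lnK. Qed.

Lemma near_expR_le (b c e : R) : 0 < e ->
  \forall n \near \oo, expR (- (n%:R * (b + e))) <= expR (- (n%:R * b) - c).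
Proof.
move=> e0; apply: filterS (nbhs_infty_ger (c / e)) => n ce_le_n.
have : c <= n%:R * e by rewrite -ler_pdivrMr.
by rewrite ler_expR mulrDr; lra.
Qed.

Lemma mulr_min_max (a b : R) : Num.min a b * Num.max a b = a * b.
Proof. by rewrite minEle maxEle; case: leP => _; rewrite // mulrC. Qed.

Lemma one_le_expR_tail (t T L : R) : 0 <= t -> T < `|L| ->
  1 <= expR (- (t * T)) * (expR (t * L) + expR (- t * L)).
Proof.
move=> t_ge0 T_lt; rewrite mulrDr.
have [L_ge0 | L_lt0] := leP 0 L.
  have : 1 <= expR (- (t * T)) * expR (t * L).
    by rewrite -expRD -expR0 ler_expR; move: T_lt; rewrite ger0_norm //; nra.
  by have := expR_ge0 (- (t * T)) => ?; have := expR_ge0 (- t * L); nra.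
have : 1 <= expR (- (t * T)) * expR (- t * L).
  by rewrite -expRD -expR0 ler_expR; move: T_lt; rewrite ltr0_norm //; nra.
by have := expR_ge0 (- (t * T)) => ?; have := expR_ge0 (t * L); nra.
Qed.

End RealFacts.

Section Gram.
Variables (R : realType) (J : finType) (M : nat) (Psi : 'I_M -> J -> R).
Hypothesis Psi1 : forall m, \sum_j Psi m j ^+ 2 = 1.

Lemma sum_signed_sqr_le (s : 'I_M -> R) (g : R) : (forall m, `|s m| <= 1) ->
  (forall m m', m != m' -> `|\sum_j Psi m j * Psi m' j| <= g) ->
  \sum_j (\sum_m s m * Psi m j) ^+ 2 <= M%:R * (M%:R * g + (1 - g)).
Proof.
move=> s_le1 Psi_g.
have -> : \sum_j (\sum_m s m * Psi m j) ^+ 2 =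
    \sum_m \sum_m' s m * s m' * \sum_j Psi m j * Psi m' j.
  under eq_bigr do rewrite expr2 big_distrlr /=.
  rewrite exchange_big /=; apply: eq_bigr => m _.
  rewrite exchange_big /=; apply: eq_bigr => m' _.
  by rewrite mulr_sumr; apply: eq_bigr => j _; ring.
have entry_le m m' :
    s m * s m' * \sum_j Psi m j * Psi m' j <= g + (m' == m)%:R * (1 - g).
  case: (eqVneq m' m) => [-> | m'm].
    rewrite (eq_bigr (fun j => Psi m j ^+ 2)) => [|j _]; last by rewrite expr2.
    rewrite Psi1 mulr1 mul1r addrC subrK; apply: le_trans (ler_norm _) _.
    by rewrite normrM -[1]mul1r ler_pM.
  rewrite mul0r addr0; apply: le_trans (ler_norm _) _.
  rewrite !normrM -[X in _ <= X]mul1r ler_pM ?mulr_ge0 //.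
    by rewrite -[1]mul1r ler_pM.
  by apply: Psi_g; rewrite eq_sym.
apply: (@le_trans _ _ (\sum_(m < M) (M%:R * g + (1 - g)))); last first.
  by rewrite sumr_const card_ord -[(_ + _) *+ M]mulr_natl.
apply: ler_sum => m _; apply: le_trans (ler_sum _ (fun m' _ => entry_le m m')) _.
rewrite big_split /= sumr_const card_ord -mulr_suml.
by rewrite (bigD1 m) //= eqxx big1 ?addr0 ?mul1r ?mulr_natl // => m' /negbTE ->.
Qed.

(* If M unit vectors all make a squared angle cosine at least a with a common
   unit vector F, then by Cauchy-Schwarz their signed sum is long, which forces
   two of them to be correlated. *)
Lemma exists_correlated_pair (F : J -> R) (a : R) :
  \sum_j F j ^+ 2 = 1 -> (forall m, a <= (\sum_j Psi m j * F j) ^+ 2) ->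
  1 < M%:R * a ->
  exists m m', m != m' /\ a - M%:R^-1 <= `|\sum_j Psi m j * Psi m' j|.
Proof.
move=> F1 Psi_F Ma_gt1.
have M_gt0 : 0 < M%:R :> R.
  by rewrite ltr0n lt0n; apply: contraTneq Ma_gt1 => ->; rewrite mul0r ltr10.
have a_gt0 : 0 < a by rewrite -(pmulr_rgt0 _ M_gt0); lra.
have [//|no_pair] :=
  pselect (exists m m', m != m' /\ a - M%:R^-1 <= `|\sum_j Psi m j * Psi m' j|).
exfalso.
set g := fun m => \sum_j Psi m j * F j.
set s := fun m => Num.sg (g m).
have upper : \sum_j (\sum_m s m * Psi m j) ^+ 2 <=
    M%:R * (M%:R * (a - M%:R^-1) + (1 - (a - M%:R^-1))).
  apply: sum_signed_sqr_le => [m | m m' mm'].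
    by rewrite /s normr_sg; case: (_ != 0).
  rewrite leNgt; apply/negP => /ltW close; apply: no_pair; by exists m, m'.
have lower : (M%:R * Num.sqrt a) ^+ 2 <= \sum_j (\sum_m s m * Psi m j) ^+ 2.
  have := CauchySchwarz_sum (fun j => \sum_m s m * Psi m j) F.
  rewrite F1 mulr1; apply: le_trans.
  have -> : \sum_j (\sum_m s m * Psi m j) * F j = \sum_m `|g m|.
    under eq_bigr do rewrite mulr_suml.
    rewrite exchange_big /=; apply: eq_bigr => m _.
    by rewrite normrEsg /g mulr_sumr; apply: eq_bigr => j _; rewrite mulrA.
  rewrite lerXn2r ?nnegrE ?mulr_ge0 ?sqrtr_ge0 ?sumr_ge0 //.
  have -> : M%:R * Num.sqrt a = \sum_(m < M) Num.sqrt a.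
    by rewrite sumr_const card_ord mulr_natl.
  apply: ler_sum => m _.
  by rewrite -sqrtr_sqr; apply: ler_wsqrtr; exact: Psi_F.
have expand : M%:R * (M%:R * (a - M%:R^-1) + (1 - (a - M%:R^-1))) =
    M%:R ^+ 2 * a - M%:R * a + 1.
  by field; rewrite gt_eqF.
have := le_trans lower upper; rewrite expand exprMn sqr_sqrtr ?(ltW a_gt0); lra.
Qed.

End Gram.

Section Channel.
Variables (R : realType) (X Y : finType) (W : X -> Y -> R).
Hypothesis HW : is_channel W.

Lemma Wn_ge0 n (x : {ffun 'I_n -> X}) y : 0 <= Wn W x y.
Proof. by apply: prodr_ge0 => i _; exact: HW.1. Qed.

Lemma sum_Wn n (x : {ffun 'I_n -> X}) : \sum_y Wn W x y = 1.
Proof.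
rewrite /Wn -(bigA_distr_bigA (fun i y => W (x i) y)) /=.
by apply: big1 => i _; exact: HW.2.
Qed.

Lemma bhatt_ge0 x x' : 0 <= bhatt W x x'.
Proof. by apply: sumr_ge0 => y _; exact: sqrtr_ge0. Qed.

(* Every output is an error for m or for m', so the overlap of the two output
   distributions is covered by the two error events. *)
Lemma sum_min_Wn_le_Pe_max n M (c : 'I_M -> {ffun 'I_n -> X}) dec m m' :
  m != m' -> \sum_y Num.min (Wn W (c m) y) (Wn W (c m') y) <= 2 * Pe_max W c dec.
Proof.
move=> mm'.
have Pe_le k : Pe_m W c dec k <= Pe_max W c dec by exact: le_bigmax.
apply: (@le_trans _ _ (Pe_m W c dec m + Pe_m W c dec m')); last first.
  by have := Pe_le m; have := Pe_le m'; lra.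
rewrite /Pe_m !(big_mkcond (fun y => dec y != _)) -big_split /=.
apply: ler_sum => y _; case: (eqVneq (dec y) m) => [-> | _] /=.
  by rewrite ?eqxx mm' add0r ge_min lexx orbT.
apply: (@le_trans _ _ (Wn W (c m) y)); first by rewrite ge_min lexx.
by rewrite lerDl; case: ifP => _ //; exact: Wn_ge0.
Qed.

Lemma sqr_prod_bhatt_le n (u v : {ffun 'I_n -> X}) :
  (\prod_i bhatt W (u i) (v i)) ^+ 2 <= 2 * \sum_y Num.min (Wn W u y) (Wn W v y).
Proof.
set mn := fun y => Num.min (Wn W u y) (Wn W v y).
set mx := fun y => Num.max (Wn W u y) (Wn W v y).
have mn_ge0 y : 0 <= mn y by rewrite le_min !Wn_ge0.
have mx_ge0 y : 0 <= mx y by rewrite le_max !Wn_ge0.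
have prod_sqrt (y : {ffun 'I_n -> Y}) :
    \prod_i Num.sqrt (W (u i) (y i) * W (v i) (y i)) = Num.sqrt (mn y) * Num.sqrt (mx y).
  rewrite -sqrtrM // mulr_min_max /Wn -big_split /=.
  have W2_ge0 i : 0 <= W (u i) (y i) * W (v i) (y i) by rewrite mulr_ge0 ?HW.1.
  rewrite -powR12_sqrt ?prodr_ge0 // -prodr_powR //.
  by apply: eq_bigr => i _; rewrite powR12_sqrt.
rewrite /bhatt bigA_distr_bigA (eq_bigr _ (fun y _ => prod_sqrt y)).
apply: le_trans (CauchySchwarz_sum _ _) _.
rewrite (eq_bigr mn (fun y _ => sqr_sqrtr (mn_ge0 y))).
rewrite (eq_bigr mx (fun y _ => sqr_sqrtr (mx_ge0 y))).
rewrite mulrC ler_wpM2r ?sumr_ge0 //.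
have -> : 2 = \sum_y (Wn W u y + Wn W v y) :> R by rewrite big_split /= !sum_Wn.
apply: ler_sum => y _.
by rewrite ge_max lerDl lerDr !Wn_ge0.
Qed.

End Channel.

Section Tilting.
Variables (R : realType) (X Y : finType) (W : X -> Y -> R).
Hypothesis HW : is_channel W.

Definition geomW x x' y := Num.sqrt (W x y * W x' y).
(* Where W vanishes llr takes junk values (ln 0 = 0), but there geomW = 0. *)
Definition llr x x' y := ln (W x' y) - ln (W x y).
(* For |t| < 1/2 this is \sum_y W(y|x)^(1/2 - t) W(y|x')^(1/2 + t), see powR_tilt. *)
Definition tilt x x' t := \sum_y geomW x x' y * expR (t * llr x x' y).
Definition llr_moment x x' k := \sum_y geomW x x' y * llr x x' y ^+ k.

Lemma geomW_ge0 x x' y : 0 <= geomW x x' y.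
Proof. exact: sqrtr_ge0. Qed.

Lemma tilt_ge0 x x' t : 0 <= tilt x x' t.
Proof. by apply: sumr_ge0 => y _; rewrite mulr_ge0 ?geomW_ge0 ?expR_ge0. Qed.

Lemma tilt0 x x' : tilt x x' 0 = bhatt W x x'.
Proof. by apply: eq_bigr => y _; rewrite mul0r expR0 mulr1. Qed.

Lemma W_gt0_or_eq0 x y : 0 < W x y \/ W x y = 0.
Proof. by have := HW.1 x y; rewrite le_eqVlt => /orP [/eqP <- | ]; [right | left]. Qed.

Lemma geomW_expR x x' y : 0 < W x y -> 0 < W x' y ->
  geomW x x' y = expR ((ln (W x y) + ln (W x' y)) / 2).
Proof.
move=> Wx_gt0 Wx'_gt0; rewrite /geomW -powR12_sqrt ?mulr_ge0 ?ltW //.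
by rewrite /powR gt_eqF ?mulr_gt0 // lnM // mulrC.
Qed.

Lemma geomW_eq0 x x' y : W x y = 0 \/ W x' y = 0 -> geomW x x' y = 0.
Proof. by rewrite /geomW; case=> ->; rewrite ?mul0r ?mulr0 sqrtr0. Qed.

Lemma geomW_expR_le x x' y : geomW x x' y * expR (- (llr x x' y / 2)) <= W x y.
Proof.
have [Wx_gt0 | Wx0] := W_gt0_or_eq0 x y; last by rewrite geomW_eq0 ?mul0r ?Wx0; [|left].
have [Wx'_gt0 | Wx'0] := W_gt0_or_eq0 x' y; last by rewrite geomW_eq0 ?mul0r ?HW.1; [|right].
by rewrite geomW_expR // -expRD /llr -[X in _ <= X]lnK ?posrE // ler_expR; lra.
Qed.

Lemma geomW_expR_le' x x' y : geomW x x' y * expR (llr x x' y / 2) <= W x' y.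
Proof.
have -> : llr x x' y = - llr x' x y by rewrite /llr opprB.
by rewrite /geomW [W x y * _]mulrC mulNr; exact: geomW_expR_le.
Qed.

Lemma powR_tilt x x' y s : 0 < s < 1 ->
  W x y `^ (1 - s) * W x' y `^ s = geomW x x' y * expR ((s - 2^-1) * llr x x' y).
Proof.
case/andP=> s_gt0 s_lt1.
have [Wx_gt0 | Wx0] := W_gt0_or_eq0 x y; last first.
  rewrite geomW_eq0 ?Wx0 ?mul0r; last by left.
  by rewrite /powR eqxx gt_eqF ?subr_gt0 // mul0r.
have [Wx'_gt0 | Wx'0] := W_gt0_or_eq0 x' y; last first.
  by rewrite geomW_eq0 ?Wx'0 ?mul0r /powR ?eqxx ?gt_eqF ?mulr0 //; right.
by rewrite geomW_expR // -expRD /powR !gt_eqF // -expRD /llr; congr expR; field.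
Qed.

Lemma tilt_le_quadratic x x' t : (forall y, t * llr x x' y <= 2^-1) ->
  tilt x x' t <= tilt x x' 0 + t * llr_moment x x' 1 + 2 * t ^+ 2 * llr_moment x x' 2.
Proof.
move=> t_small; rewrite /tilt /llr_moment !mulr_sumr -!big_split /=.
apply: ler_sum => y _; rewrite mul0r expR0 mulr1.
apply: le_trans (ler_wpM2l (geomW_ge0 _ _ _) (expR_le_quadratic (t_small y))) _.
lra.
Qed.

Lemma llr_moment2_ge0 x x' : 0 <= llr_moment x x' 2.
Proof. by apply: sumr_ge0 => y _; rewrite mulr_ge0 ?geomW_ge0 ?sqr_ge0. Qed.

Definition llr_bound := \sum_x \sum_x' \sum_y `|llr x x' y|.
Definition tilt_radius := (4 * (llr_bound + 1))^-1.

Lemma llr_bound_ge0 : 0 <= llr_bound.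
Proof. by do 3! (apply: sumr_ge0 => ? _). Qed.

Lemma tilt_radius_gt0 : 0 < tilt_radius.
Proof. by rewrite invr_gt0; have := llr_bound_ge0; lra. Qed.

Lemma tilt_radius_le : tilt_radius <= 4^-1.
Proof. by rewrite lef_pV2 ?posrE; have := llr_bound_ge0; lra. Qed.

Lemma mul_llr_le t x x' y : `|t| <= tilt_radius -> t * llr x x' y <= 2^-1.
Proof.
move=> t_le; apply: le_trans (ler_norm _) _; rewrite normrM.
have llr_le : `|llr x x' y| <= llr_bound.
  rewrite /llr_bound; apply: (le_trans _ (ler_sum_term x _)); last first.
    by move=> ?; do 2! (apply: sumr_ge0 => ? _).
  apply: (le_trans _ (ler_sum_term x' _)); last by move=> ?; exact: sumr_ge0.
  by apply: ler_sum_term.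
have radius_bound : tilt_radius * llr_bound <= 4^-1.
  by rewrite ler_pdivrMl ?mulr_gt0; have := llr_bound_ge0; lra.
apply: le_trans (ler_pM _ _ t_le llr_le) _ => //; lra.
Qed.

Section Reversible.
Hypothesis Hrev : pairwise_reversible W.

Lemma tilt_ge_tilt0 x x' t : `|t| < 2^-1 -> tilt x x' 0 <= tilt x x' t.
Proof.
rewrite ltr_norml => /andP [t_gt t_lt].
have s_range : 0 <= 2^-1 + t <= 1 by apply/andP; split; lra.
have := Hrev x x' s_range; rewrite /tilt.
rewrite (eq_bigr (fun y => geomW x x' y * expR ((2^-1 - 2^-1) * llr x x' y))); last first.
  by move=> y _; apply: powR_tilt; lra.
rewrite [X in _ <= X -> _](eq_bigr (fun y =>
  geomW x x' y * expR ((2^-1 + t - 2^-1) * llr x x' y))); last first.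
  by move=> y _; apply: powR_tilt; lra.
by rewrite subrr addrAC subrr add0r.
Qed.

(* tilt x x' is minimal at the interior point 0, so its slope there vanishes;
   the quadratic bound turns this into an inequality for a small step against
   the slope. *)
Lemma llr_moment1_eq0 x x' : llr_moment x x' 1 = 0.
Proof.
set s := llr_moment x x' 1; set k := llr_moment x x' 2.
have k_ge0 : 0 <= k := llr_moment2_ge0 x x'.
set D := `|s| + 2 * k + 1.
have D_gt0 : 0 < D by rewrite /D; have := normr_ge0 s; lra.
set eta := tilt_radius / D.
have eta_gt0 : 0 < eta by rewrite divr_gt0 // tilt_radius_gt0.
have etaD : eta * D = tilt_radius by rewrite /eta mulfVK // gt_eqF.
set t := - s * eta.
have t_le : `|t| <= tilt_radius.
  rewrite /t normrM normrN (gtr0_norm eta_gt0) -etaD mulrC ler_pM2l //.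
  by rewrite /D; lra.
have t_lt_half : `|t| < 2^-1.
  by apply: le_lt_trans t_le (le_lt_trans tilt_radius_le _); lra.
have := tilt_ge_tilt0 x x' t_lt_half.
have := tilt_le_quadratic (fun y => mul_llr_le x x' y t_le).
rewrite -/s -/k => quad min0.
have eta_k : 2 * eta * k < 1.
  have : eta * (2 * k + 1) <= 4^-1.
    apply: le_trans tilt_radius_le; rewrite -etaD ler_pM2l // /D.
    by have := normr_ge0 s; lra.
  by nra.
have : 0 <= s ^+ 2 * (eta * (2 * eta * k - 1)) by rewrite /t in quad min0; nra.
have neg : eta * (2 * eta * k - 1) < 0 by rewrite pmulr_rlt0 //; lra.
rewrite nmulr_lge0 // => s2_le0.
by apply/eqP; rewrite -sqrf_eq0 eq_le s2_le0 sqr_ge0.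
Qed.

(* Division by a vanishing bhatt W x x' gives 0, harmless since then all
   geomW x x' y, hence llr_moment x x' 2, vanish as well. *)
Definition tilt_curv := \sum_x \sum_x' 2 * llr_moment x x' 2 / bhatt W x x'.

Lemma tilt_curv_ge0 : 0 <= tilt_curv.
Proof.
by do 2! (apply: sumr_ge0 => ? _); rewrite divr_ge0 ?bhatt_ge0 ?mulr_ge0 ?llr_moment2_ge0.
Qed.

Lemma tilt_le_bhatt x x' t : `|t| <= tilt_radius ->
  tilt x x' t <= bhatt W x x' * (1 + t ^+ 2 * tilt_curv).
Proof.
move=> t_le; have := tilt_le_quadratic (fun y => mul_llr_le x x' y t_le).
rewrite llr_moment1_eq0 mulr0 addr0 tilt0 => /le_trans; apply.
rewrite mulrDr mulr1 lerD2l.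
rewrite (_ : 2 * _ * _ = t ^+ 2 * (2 * llr_moment x x' 2)); last by ring.
rewrite (_ : bhatt W x x' * _ = t ^+ 2 * (bhatt W x x' * tilt_curv)); last by ring.
rewrite ler_wpM2l ?sqr_ge0 //.
have [B0 | B_gt0] := eqVneq (bhatt W x x') 0.
  suff -> : llr_moment x x' 2 = 0 by rewrite B0 mulr0 mul0r.
  by apply: big1 => y _; rewrite /geomW (psumr_eq0P _ B0) ?mul0r // => y' _.
rewrite [bhatt W x x' * _]mulrC -ler_pdivrMr ?lt_def ?B_gt0 ?bhatt_ge0 //.
apply: (le_trans _ (ler_sum_term x _)); last first.
  move=> ?; apply: sumr_ge0 => ? _.
  by rewrite divr_ge0 ?bhatt_ge0 ?mulr_ge0 ?llr_moment2_ge0.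
apply: (le_trans _ (ler_sum_term x' _)) => // ?.
by rewrite divr_ge0 ?bhatt_ge0 ?mulr_ge0 ?llr_moment2_ge0.
Qed.

End Reversible.
End Tilting.

Section TiltedProduct.
Variables (R : realType) (X Y : finType) (W : X -> Y -> R).
Hypothesis HW : is_channel W.
Variables (n : nat) (u v : {ffun 'I_n -> X}).

Definition geomWn (y : {ffun 'I_n -> Y}) := \prod_i geomW W (u i) (v i) (y i).
Definition llrn (y : {ffun 'I_n -> Y}) := \sum_i llr W (u i) (v i) (y i).
Definition tiltn t := \sum_y geomWn y * expR (t * llrn y).

Lemma geomWn_ge0 y : 0 <= geomWn y.
Proof. by apply: prodr_ge0 => i _; exact: geomW_ge0. Qed.

Lemma prod_geomW_expR (g : 'I_n -> R) (y : {ffun 'I_n -> Y}) :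
  \prod_i (geomW W (u i) (v i) (y i) * expR (g i)) = geomWn y * expR (\sum_i g i).
Proof. by rewrite big_split /= expR_sum. Qed.

Lemma tiltn_prod t : tiltn t = \prod_i tilt W (u i) (v i) t.
Proof.
rewrite /tilt bigA_distr_bigA; apply: eq_bigr => y _.
by rewrite prod_geomW_expR /llrn mulr_sumr.
Qed.

Lemma geomWn_expR_le y : geomWn y * expR (- (llrn y / 2)) <= Wn W u y.
Proof.
rewrite /llrn mulr_suml -sumrN -prod_geomW_expR; apply: ler_prod => i _.
by rewrite mulr_ge0 ?geomW_ge0 ?expR_ge0 //= geomW_expR_le.
Qed.

Lemma geomWn_expR_le' y : geomWn y * expR (llrn y / 2) <= Wn W v y.
Proof.
rewrite /llrn mulr_suml -prod_geomW_expR; apply: ler_prod => i _.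
by rewrite mulr_ge0 ?geomW_ge0 ?expR_ge0 //= geomW_expR_le'.
Qed.

(* Where |llrn y| <= T both output probabilities dominate geomWn y e^(-T/2);
   elsewhere the bracket on the right is at least 1. *)
Lemma geomWn_le_min (T t : R) y : 0 <= T -> 0 <= t ->
  geomWn y * expR (- (T / 2)) <= Num.min (Wn W u y) (Wn W v y) +
    geomWn y * expR (- (T / 2)) *
      (expR (- (t * T)) * (expR (t * llrn y) + expR (- t * llrn y))).
Proof.
move=> T_ge0 t_ge0; set A := geomWn y * expR (- (T / 2)).
have A_ge0 : 0 <= A by rewrite mulr_ge0 ?geomWn_ge0 ?expR_ge0.
have min_ge0 : 0 <= Num.min (Wn W u y) (Wn W v y) by rewrite le_min !Wn_ge0.
have [llr_le | T_lt] := leP `|llrn y| T.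
  have A_le : A <= Num.min (Wn W u y) (Wn W v y).
    move: llr_le; rewrite ler_norml => /andP [lb ub].
    rewrite le_min; apply/andP; split.
      by apply: le_trans (geomWn_expR_le y); rewrite ler_wpM2l ?geomWn_ge0 // ler_expR; lra.
    by apply: le_trans (geomWn_expR_le' y); rewrite ler_wpM2l ?geomWn_ge0 // ler_expR; lra.
  by apply: le_trans A_le _; rewrite lerDl mulr_ge0 // mulr_ge0 ?addr_ge0 ?expR_ge0.
have Z_ge1 := one_le_expR_tail t_ge0 T_lt.
have : A * 1 <= A * (expR (- (t * T)) * (expR (t * llrn y) + expR (- t * llrn y))).
  by rewrite ler_wpM2l.
lra.
Qed.

Lemma tiltn0 : tiltn 0 = \prod_i bhatt W (u i) (v i).
Proof. by rewrite tiltn_prod; apply: eq_bigr => i _; exact: tilt0. Qed.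

Lemma sum_min_Wn_ge_tiltn (T t : R) : 0 <= T -> 0 <= t ->
  expR (- (T / 2)) * tiltn 0 <= \sum_y Num.min (Wn W u y) (Wn W v y) +
    expR (- (T / 2)) * expR (- (t * T)) * (tiltn t + tiltn (- t)).
Proof.
move=> T_ge0 t_ge0.
have -> : expR (- (T / 2)) * tiltn 0 = \sum_y geomWn y * expR (- (T / 2)).
  by rewrite /tiltn mulr_sumr; apply: eq_bigr => y _; rewrite mul0r expR0 mulr1 mulrC.
rewrite /tiltn -big_split mulr_sumr -big_split /=.
apply: ler_sum => y _; apply: le_trans (geomWn_le_min y T_ge0 t_ge0) _.
by rewrite mulNr; lra.
Qed.

Section Reversible.
Hypothesis Hrev : pairwise_reversible W.

Lemma tiltn_le t : `|t| <= tilt_radius W ->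
  tiltn t <= tiltn 0 * expR (n%:R * (t ^+ 2 * tilt_curv W)).
Proof.
move=> t_le; rewrite tiltn_prod tiltn0.
apply: (@le_trans _ _ (\prod_i (bhatt W (u i) (v i) * (1 + t ^+ 2 * tilt_curv W)))).
  by apply: ler_prod => i _; rewrite tilt_ge0 tilt_le_bhatt.
rewrite big_split /= prodr_const card_ord; apply: ler_wpM2l.
  by apply: prodr_ge0 => i _; exact: bhatt_ge0.
rewrite expRM_natl lerXn2r ?nnegrE ?expR_ge0 ?expR_ge1Dx //.
by apply: addr_ge0 => //; apply: mulr_ge0; [exact: sqr_ge0 | exact: tilt_curv_ge0].
Qed.

Lemma sum_min_Wn_ge_tilted (T t : R) : 0 <= T -> 0 <= t -> t <= tilt_radius W ->
  expR (- (T / 2)) * \prod_i bhatt W (u i) (v i) *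
    (1 - 2 * expR (- (t * T) + n%:R * (t ^+ 2 * tilt_curv W)))
  <= \sum_y Num.min (Wn W u y) (Wn W v y).
Proof.
move=> T_ge0 t_ge0 t_le.
have := sum_min_Wn_ge_tiltn T_ge0 t_ge0.
have := tiltn_le (t := t); rewrite ger0_norm // => /(_ t_le) tilt_pos.
have := tiltn_le (t := - t); rewrite normrN ger0_norm // sqrrN => /(_ t_le) tilt_neg.
rewrite tiltn0 in tilt_pos tilt_neg *; rewrite expRD.
set E := expR (- (T / 2)); set F := expR (- (t * T)).
set B := \prod_i _; set G := expR (n%:R * _); rewrite -/B -/G in tilt_pos tilt_neg.
have : E * F * (tiltn t + tiltn (- t)) <= E * F * (2 * (B * G)).
  by rewrite ler_wpM2l ?mulr_ge0 ?expR_ge0 //; lra.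
lra.
Qed.

End Reversible.

End TiltedProduct.

(* The tilt t is chosen so that the exponent n t^2 C of tiltn_le is at most
   half of the gain n t T = 2 n t e. *)
Lemma sum_min_Wn_ge_bhatt (R : realType) (X Y : finType) (W : X -> Y -> R) :
  is_channel W -> pairwise_reversible W -> forall e : R, 0 < e ->
  \forall n \near \oo, forall u v : {ffun 'I_n -> X},
    expR (- (n%:R * e)) * \prod_i bhatt W (u i) (v i) <=
    2 * \sum_y Num.min (Wn W u y) (Wn W v y).
Proof.
move=> HW Hrev e e_gt0.
have C_ge0 := tilt_curv_ge0 W; set C := tilt_curv W in C_ge0 *.
set t := Num.min (tilt_radius W) (e / (C + 1)).
have t_gt0 : 0 < t by rewrite lt_min tilt_radius_gt0 divr_gt0 //; lra.
have t_le : t <= tilt_radius W by rewrite ge_min lexx.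
have tC_le : t * C <= e.
  have : t * (C + 1) <= e by rewrite -ler_pdivlMr ?ge_min ?lexx ?orbT //; lra.
  nra.
apply: filterS (nbhs_infty_ger (ln 4 / (t * e))) => n n_large u v.
have nte : ln 4 <= n%:R * t * e by rewrite -mulrA -ler_pdivrMr ?mulr_gt0.
have ntC : n%:R * t * (t * C) <= n%:R * t * e.
  by apply: ler_wpM2l => //; rewrite mulr_ge0 // ltW.
have Q_le : expR (- (t * (n%:R * (2 * e))) + n%:R * (t ^+ 2 * C)) <= 4^-1.
  have -> : 4^-1 = expR (- ln 4) :> R by rewrite expRN lnK ?posrE.
  by rewrite ler_expR; lra.
have T_ge0 : 0 <= n%:R * (2 * e) by rewrite !mulr_ge0 // ltW.
have := sum_min_Wn_ge_tilted HW u v Hrev T_ge0 (ltW t_gt0) t_le.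
rewrite (_ : n%:R * (2 * e) / 2 = n%:R * e); last by field.
set Q := expR _ in Q_le *; set E := expR _; set B := \prod_i _.
have EB_ge0 : 0 <= E * B.
  by rewrite mulr_ge0 ?expR_ge0 ?prodr_ge0 // => i _; exact: bhatt_ge0.
nra.
Qed.

Section Reliability.
Variables (R : realType) (X Y : finType) (W : X -> Y -> R).
Hypotheses (HX : (0 < #|X|)%N) (HW : is_channel W).

(* A code repeating a single input letter has every rate, so the set whose
   infimum is Pemax_opt is nonempty; this is where HX is needed. *)
Lemma reliability_le (Rt b : R) :
  (forall e, 0 < e -> \forall n \near \oo,
    forall M (c : 'I_M -> {ffun 'I_n -> X}) dec, (0 < M)%N ->
      Rt <= ln M%:R / n%:R -> expR (- (n%:R * (b + e))) <= Pe_max W c dec) ->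
  (reliability W Rt <= b%:E)%E.
Proof.
move=> Pe_ge; apply: limn_esup_le => e e0.
apply: filterS2 (Pe_ge e e0) (nbhs_infty_gt 0) => n Pe_ge_n n_gt0.
have n_pos : 0 < n%:R :> R by rewrite ltr0n.
have [x0 _] := card_gt0P HX.
set codes := [set p : R | exists M (c : 'I_M -> {ffun 'I_n -> X}) dec,
  (0 < M)%N /\ Rt <= ln M%:R / n%:R /\ p = Pe_max W c dec].
have codes_n0 : codes !=set0.
  pose k := Num.truncn (expR (n%:R * Rt)).
  pose c0 (_ : 'I_k.+1) : {ffun 'I_n -> X} := [ffun=> x0].
  pose dec0 (_ : {ffun 'I_n -> Y}) : 'I_k.+1 := ord0.
  exists (Pe_max W c0 dec0), k.+1, c0, dec0; split => //; split => //.
  rewrite ler_pdivlMr // -(expRK (Rt * n%:R)) ler_ln ?posrE ?expR_gt0 ?ltr0n //.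
  by rewrite mulrC ltW // truncnS_gt.
have lb_opt : expR (- (n%:R * (b + e))) <= Pemax_opt W n Rt.
  by apply: (lb_le_inf codes_n0) => _ [M [c [dec [M_gt0 [rate ->]]]]]; exact: Pe_ge_n.
have opt_gt0 : 0 < Pemax_opt W n Rt by apply: lt_le_trans lb_opt; exact: expR_gt0.
rewrite (gt_eqF opt_gt0) lee_fin ler_pdivrMr //.
by move: lb_opt; rewrite -ler_ln ?posrE ?expR_gt0 // expRK; lra.
Qed.

Variables (rho : R) (d : nat) (psi : X -> 'I_d -> R) (f : 'I_d -> R) (V : R).
Hypotheses (rho_gt0 : 0 < rho) (psi_rep : ortho_rep W rho psi) (f1 : dotv f f = 1)
  (psi_f : forall x, (loginvsq (dotv (psi x) f) <= V%:E)%E).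

(* The n-fold tensor powers of psi along the codewords are unit vectors whose
   squared inner products with the tensor power of f are at least e^(-nV). *)
Lemma exists_close_codewords n M (c : 'I_M -> {ffun 'I_n -> X}) :
  2 <= M%:R * expR (- (n%:R * V)) ->
  exists m m', m != m' /\
    expR (- (rho * (n%:R * V + ln 2))) <= \prod_i bhatt W (c m i) (c m' i).
Proof.
move=> M_large; set a := expR (- (n%:R * V)) in M_large.
have a_gt0 : 0 < a by exact: expR_gt0.
pose Psi m (j : {ffun 'I_n -> 'I_d}) := \prod_i psi (c m i) (j i).
pose F (j : {ffun 'I_n -> 'I_d}) := \prod_i f (j i).
have sqr_sum (g : {ffun 'I_n -> 'I_d} -> R) : \sum_j g j ^+ 2 = \sum_j g j * g j.
  by apply: eq_bigr => j _; rewrite expr2.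
have F1 : \sum_j F j ^+ 2 = 1.
  rewrite sqr_sum (sum_ffun_prodM (I := 'I_n) (fun=> f) (fun=> f)).
  by apply: big1 => i _; exact: f1.
have Psi1 m : \sum_j Psi m j ^+ 2 = 1.
  rewrite sqr_sum (sum_ffun_prodM (fun i => psi (c m i)) (fun i => psi (c m i))).
  by apply: big1 => i _; exact: psi_rep.1.
have Psi_F m : a <= (\sum_j Psi m j * F j) ^+ 2.
  rewrite (sum_ffun_prodM (fun i => psi (c m i)) (fun=> f)) -prodrXl.
  apply: (@le_trans _ _ (\prod_(i < n) expR (- V))).
    by rewrite prodr_const card_ord /a -expRM_natl mulrN.
  by apply: ler_prod => i _; rewrite expR_ge0 /=; exact: loginvsq_le (psi_f _).
have [|m [m' [mm' corr]]] := exists_correlated_pair Psi1 F1 Psi_F; first lra.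
exists m, m'; split => //.
have M_gt0 : 0 < M%:R :> R.
  by rewrite ltr0n lt0n; apply: contraTneq M_large => ->; rewrite mul0r; lra.
have invM_le : M%:R^-1 <= a / 2.
  by rewrite invf_ple ?posrE ?divr_gt0 // invf_div ler_pdivrMr // mulrC.
set B := \prod_i bhatt W (c m i) (c m' i).
have B_ge0 : 0 <= B by apply: prodr_ge0 => i _; exact: bhatt_ge0.
have a_le_B : a / 2 <= B `^ rho^-1.
  apply: (@le_trans _ _ (a - M%:R^-1)); first lra.
  apply: le_trans corr _.
  rewrite (sum_ffun_prodM (fun i => psi (c m i)) (fun i => psi (c m' i))).
  rewrite normr_prod /B -prodr_powR.
    by apply: ler_prod => i _; rewrite normr_ge0 psi_rep.2.
  by move=> i; exact: bhatt_ge0.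
have : (a / 2) `^ rho <= (B `^ rho^-1) `^ rho.
  by apply: ge0_ler_powR; rewrite ?nnegrE ?powR_ge0 ?divr_ge0 ?(ltW rho_gt0) ?(ltW a_gt0).
rewrite -powRrM mulVf ?gt_eqF // powRr1 // /powR gt_eqF ?divr_gt0 //.
by rewrite ln_div ?posrE // /a expRK; congr (expR _ <= _); ring.
Qed.

Lemma close_codewords_of_rate (Rt : R) : V < Rt ->
  \forall n \near \oo, forall M (c : 'I_M -> {ffun 'I_n -> X}), (0 < M)%N ->
    Rt <= ln M%:R / n%:R ->
    exists m m', m != m' /\
      expR (- (rho * (n%:R * V + ln 2))) <= \prod_i bhatt W (c m i) (c m' i).
Proof.
move=> VRt; have ln2_gt0 : 0 < ln 2 :> R by rewrite ln_gt0 // ltr1n.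
apply: filterS (nbhs_infty_ger (ln 2 / (Rt - V))) => n n_large M c M_gt0 rate.
have n_gt0 : 0 < n%:R :> R by apply: lt_le_trans n_large; rewrite divr_gt0 // subr_gt0.
have M_ge : expR (n%:R * Rt) <= M%:R.
  have : Rt * n%:R <= ln M%:R by rewrite -ler_pdivlMr.
  by rewrite mulrC -ler_expR lnK ?posrE ?ltr0n.
apply: exists_close_codewords.
apply: le_trans (_ : expR (n%:R * Rt) * expR (- (n%:R * V)) <= _).
  rewrite -expRD -[X in X <= _]lnK ?posrE // ler_expR.
  by move: n_large; rewrite ler_pdivrMr ?subr_gt0 // mulrBr; lra.
by rewrite ler_wpM2r ?expR_ge0.
Qed.

Lemma reliability_le_rep (Rt : R) : V < Rt -> (reliability W Rt <= (2 * rho * V)%:E)%E.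
Proof.
move=> VRt; apply: reliability_le => // e e_gt0.
apply: filterS2 (close_codewords_of_rate VRt)
  (near_expR_le (2 * rho * V) (2 * rho * ln 2 + ln 4) e_gt0).
move=> n close exp_le M c dec M_gt0 rate; apply: le_trans exp_le _.
have [m [m' [mm' B_ge]]] := close M c M_gt0 rate.
have := sqr_prod_bhatt_le HW (c m) (c m'); have := sum_min_Wn_le_Pe_max HW c dec mm'.
set B := (\prod_i _) in B_ge *; set E := expR _ in B_ge.
have E2 : expR (- (n%:R * (2 * rho * V)) - (2 * rho * ln 2 + ln 4)) = E ^+ 2 / 4.
  rewrite opprD addrA expRB_ln // /E -expRM_natl; congr (expR _ / _); ring.
have : E ^+ 2 <= B ^+ 2 by rewrite lerXn2r ?nnegrE ?expR_ge0 // (le_trans _ B_ge) ?expR_ge0.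
rewrite E2; lra.
Qed.

Lemma reliability_le_rep_reversible (Rt : R) : pairwise_reversible W -> V < Rt ->
  (reliability W Rt <= (rho * V)%:E)%E.
Proof.
move=> Hrev VRt; apply: reliability_le => // e e_gt0.
have e2_gt0 : 0 < e / 2 by rewrite divr_gt0.
apply: filterS3 (close_codewords_of_rate VRt)
  (sum_min_Wn_ge_bhatt HW Hrev e2_gt0)
  (near_expR_le (rho * V + e / 2) (rho * ln 2 + ln 4) e2_gt0).
move=> n close tilted exp_le M c dec M_gt0 rate.
rewrite {1}(splitr e) addrA; apply: le_trans exp_le _.
have [m [m' [mm' B_ge]]] := close M c M_gt0 rate.
have := tilted (c m) (c m'); have := sum_min_Wn_le_Pe_max HW c dec mm'.
set B := (\prod_i _) in B_ge *; set E := expR (- (rho * _)) in B_ge.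
have E4 : expR (- (n%:R * (rho * V + e / 2)) - (rho * ln 2 + ln 4)) =
    expR (- (n%:R * (e / 2))) * E / 4.
  rewrite opprD addrA expRB_ln // /E -expRD; congr (expR _ / _); ring.
have : expR (- (n%:R * (e / 2))) * E <= expR (- (n%:R * (e / 2))) * B.
  by rewrite ler_wpM2l ?expR_ge0.
rewrite E4; lra.
Qed.

End Reliability.

Lemma vartheta_ge0 (R : realType) (X Y : finType) (W : X -> Y -> R) rho :
  (0 < #|X|)%N -> (0 <= vartheta W rho)%E.
Proof.
move=> /card_gt0P [x0 _]; apply/ereal_infP => _ [d [psi [psi_rep ->]]].
apply/ereal_infP => _ [f [f1 ->]].
by apply: le_trans (le_bigmax _ _ x0); exact: loginvsq_ge0 (psi_rep.1 x0) f1.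
Qed.

Lemma reliability_le_vartheta (R : realType) (X Y : finType) (W : X -> Y -> R)
    (rho k Rt : R) : (0 < #|X|)%N -> 0 < k ->
  (forall d (psi : X -> 'I_d -> R) f V, ortho_rep W rho psi -> dotv f f = 1 ->
     (forall x, (loginvsq (dotv (psi x) f) <= V%:E)%E) -> V < Rt ->
     (reliability W Rt <= (k * V)%:E)%E) ->
  (vartheta W rho < Rt%:E)%E -> (reliability W Rt <= k%:E * vartheta W rho)%E.
Proof.
move=> HX k_gt0 rep_bound theta_lt.
have := vartheta_ge0 W rho HX.
case theta_eq : (vartheta W rho) theta_lt => [r | |] //=; rewrite lte_fin lee_fin.
move=> r_lt r_ge0; rewrite -EFinM; apply/lee_addgt0Pr => e e_gt0.
set eta := Num.min ((Rt - r) / 2) (e / k).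
have eta_gt0 : 0 < eta by rewrite lt_min !divr_gt0 // subr_gt0.
have eta_le1 : eta <= (Rt - r) / 2 by rewrite ge_min lexx.
have eta_le2 : eta <= e / k by rewrite ge_min lexx orbT.
have : (vartheta W rho < (r + eta)%:E)%E by rewrite theta_eq lte_fin; lra.
move=> /ereal_inf_lt [_ [d [psi [psi_rep ->]]]] /ereal_inf_lt [_ [f [f1 ->]]] V_lt.
apply: le_trans (rep_bound d psi f (r + eta) psi_rep f1 _ _) _.
- by move=> x; apply: le_trans (ltW V_lt); exact: le_bigmax.
- lra.
by rewrite -EFinD lee_fin mulrDr lerD2l -ler_pdivlMl // mulrC.
Qed.

Unset Implicit Arguments.

Theorem corollary1 (R : realType) (X Y : finType) (W : X -> Y -> R)
  (HX : (0 < #|X|)%N) (HW : is_channel W) (rho : R) (Hrho : 1 <= rho) :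
  (forall Rt : R, (vartheta W rho < Rt%:E)%E ->
     (reliability W Rt <= (2 * rho)%:E * vartheta W rho)%E) /\
  (pairwise_reversible W ->
   forall Rt : R, (vartheta W rho < Rt%:E)%E ->
     (reliability W Rt <= rho%:E * vartheta W rho)%E).
Proof.
have rho_gt0 : 0 < rho by lra.
split=> [|Hrev] Rt.
- apply: reliability_le_vartheta => //; first lra.
  move=> d psi f V psi_rep f1 psi_f.
  exact: (reliability_le_rep HX HW rho_gt0 psi_rep f1 psi_f).
- apply: reliability_le_vartheta => // d psi f V psi_rep f1 psi_f.
  exact: (reliability_le_rep_reversible HX HW rho_gt0 psi_rep f1 psi_f Hrev).
Qed.
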